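(* For every LTL formula $\varphi$ in PNF and every $x\in\Sigma$, $\partial_x(\varphi)=\mathrm{d}_x(\varphi)$.
   Context: LTL formulae in PNF: $\varphi,\psi ::= p \mid \neg p \mid \mathbf{tt} \mid \mathbf{ff} \mid \varphi\wedge\psi \mid \varphi\vee\psi \mid \bigcirc\varphi \mid \varphi\,\mathcal{U}\,\psi \mid \varphi\,\mathcal{R}\,\psi$ (with $\Diamond\varphi=\mathbf{tt}\,\mathcal{U}\,\varphi$, $\Box\varphi=\mathbf{ff}\,\mathcal{R}\,\varphi$), words in $\Sigma^\omega$, interpretation $I:\Sigma\to\mathcal{P}(AP)$. Temporal formula: does not start with $\wedge$ or $\vee$. Monomials $\mu,\nu$: $\mathbf{ff}$ or consistent sets of literals; $x\models\mu$ means all literals of $\mu$ hold under $I(x)$; $\mu\sqcap\nu$ is $\mathbf{ff}$ if either is $\mathbf{ff}$ or $\mu\cup\nu$ is contradictory, else $\mu\cup\nu$. $\varphi\,\dot\wedge\,\psi$: formal conjunction normalized modulo associativity, commutativity, idempotence ($\mathbf{tt}$ = empty formal conjunction). $\mathrm{simp}(\varphi\wedge\psi)=\{\varphi'\,\dot\wedge\,\psi'\mid\varphi'\in\mathrm{simp}(\varphi),\psi'\in\mathrm{simp}(\psi)\}$, $\mathrm{simp}(\varphi\vee\psi)=\mathrm{simp}(\varphi)\cup\mathrm{simp}(\psi)$, $\mathrm{simp}(\varphi)=\{\varphi\}$ for temporal $\varphi$. Linear factors: $\mathrm{LF}(\ell)=\{\langle\{\ell\},\mathbf{tt}\rangle\}$,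 $\mathrm{LF}(\mathbf{tt})=\{\langle\mathbf{tt},\mathbf{tt}\rangle\}$, $\mathrm{LF}(\mathbf{ff})=\{\}$, $\mathrm{LF}(\varphi\vee\psi)=\mathrm{LF}(\varphi)\cup\mathrm{LF}(\psi)$, $\mathrm{LF}(\varphi\wedge\psi)=\{\langle\mu\sqcap\nu,\varphi'\,\dot\wedge\,\psi'\rangle\mid\langle\mu,\varphi'\rangle\in\mathrm{LF}(\varphi),\langle\nu,\psi'\rangle\in\mathrm{LF}(\psi),\mu\sqcap\nu\neq\mathbf{ff}\}$, $\mathrm{LF}(\bigcirc\varphi)=\{\langle\mathbf{tt},\varphi'\rangle\mid\varphi'\in\mathrm{simp}(\varphi)\}$, $\mathrm{LF}(\varphi\,\mathcal{U}\,\psi)=\mathrm{LF}(\psi)\cup\{\langle\mu,\varphi'\,\dot\wedge\,(\varphi\,\mathcal{U}\,\psi)\rangle\mid\langle\mu,\varphi'\rangle\in\mathrm{LF}(\varphi)\}$, $\mathrm{LF}(\varphi\,\mathcal{R}\,\psi)=\{\langle\mu\sqcap\nu,\varphi'\,\dot\wedge\,\psi'\rangle\mid\langle\mu,\varphi'\rangle\in\mathrm{LF}(\varphi),\langle\nu,\psi'\rangle\in\mathrm{LF}(\psi),\mu\sqcap\nu\neq\mathbf{ff}\}\cup\{\langle\nu,\psi'\,\dot\wedge\,(\varphi\,\mathcal{R}\,\psi)\rangle\mid\langle\nu,\psi'\rangle\in\mathrm{LF}(\psi)\}$. Partial derivatives via linear factors: $\partial_x(\varphi)=\{\varphi'\mid\langle\mu,\varphi'\rangle\in\mathrm{LF}(\varphi),x\models\mu\}$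 for temporal $\varphi$, $\partial_x(\mathbf{tt})=\{\mathbf{tt}\}$, $\partial_x(\varphi\,\dot\wedge\,\psi)=\{\varphi'\,\dot\wedge\,\psi'\mid\varphi'\in\partial_x(\varphi),\psi'\in\partial_x(\psi)\}$. Direct partial derivatives: $\mathrm{d}_x(\mathbf{tt})=\{\mathbf{tt}\}$, $\mathrm{d}_x(\mathbf{ff})=\{\}$, $\mathrm{d}_x(\ell)=\{\mathbf{tt}\}$ if $x\models\ell$ and $\{\}$ otherwise, $\mathrm{d}_x(\varphi\vee\psi)=\mathrm{d}_x(\varphi)\cup\mathrm{d}_x(\psi)$, $\mathrm{d}_x(\varphi\wedge\psi)=\{\varphi'\wedge\psi'\mid\varphi'\in\mathrm{d}_x(\varphi),\psi'\in\mathrm{d}_x(\psi)\}$, $\mathrm{d}_x(\bigcirc\varphi)=\mathrm{simp}(\varphi)$, $\mathrm{d}_x(\varphi\,\mathcal{U}\,\psi)=\mathrm{d}_x(\psi)\cup\{\varphi'\wedge(\varphi\,\mathcal{U}\,\psi)\mid\varphi'\in\mathrm{d}_x(\varphi)\}$, $\mathrm{d}_x(\varphi\,\mathcal{R}\,\psi)=\{\varphi'\wedge\psi'\mid\varphi'\in\mathrm{d}_x(\varphi),\psi'\in\mathrm{d}_x(\psi)\}\cup\{\psi'\wedge(\varphi\,\mathcal{R}\,\psi)\mid\psi'\in\mathrm{d}_x(\psi)\}$, $\mathrm{d}_x(\Diamond\varphi)=\mathrm{d}_x(\varphi)\cup\{\Diamond\varphi\}$, $\mathrm{d}_x(\Box\varphi)=\{\varphi'\wedge\Box\varphi\mid\varphi'\in\mathrm{d}_x(\varphi)\}$,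 where conjunctions of temporal formulae in results are normalized (as formal conjunctions). *)

From mathcomp Require Import all_boot.
From mathcomp Require Import boolp classical_sets.

Set Implicit Arguments.
Unset Strict Implicit.
Unset Printing Implicit Defensive.

Local Open Scope classical_set_scope.

(* LTL formulae in positive normal form over atomic propositions AP.
   [FLit p true] is the literal p, [FLit p false] is the literal ~p.
   Diamond/Box are the abbreviations tt U phi and ff R phi. *)
Inductive formula (AP : Type) : Type :=
  | FLit : AP -> bool -> formula AP
  | FTt : formula AP
  | FFf : formula AP
  | FAnd : formula AP -> formula AP -> formula AP
  | FOr : formula AP -> formula AP -> formula AP
  | FNext : formula AP -> formula AP
  | FUntil : formula AP -> formula AP -> formula AP
  | FRelease : formula AP -> formula AP -> formula AP.

Arguments FTt {AP}.
Arguments FFf {AP}.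

Definition FEventually {AP} (f : formula AP) := FUntil FTt f.
Definition FAlways {AP} (f : formula AP) := FRelease FFf f.

Definition literal (AP : Type) := (AP * bool)%type.

Definition lit_holds {AP Sigma : Type} (I : Sigma -> set AP) (x : Sigma)
  (l : literal AP) : Prop :=
  if l.2 then I x l.1 else ~ I x l.1.

(* formal conjunctions of temporal formulae, normalized modulo
   associativity, commutativity and idempotence: sets of temporal formulae.
   The empty formal conjunction is tt; formal conjunction is union. *)
Definition fconj (AP : Type) := set (formula AP).

(* monomials: None = ff, Some m = (consistent) set of literals;
   Some set0 = tt *)
Definition monomial (AP : Type) := option (set (literal AP)).

Definition contradictory {AP} (m : set (literal AP)) : Prop :=
  exists p, m (p, true) /\ m (p, false).

Definition mmeet {AP} (mu nu : monomial AP) : monomial AP :=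
  match mu, nu with
  | Some m, Some n => if `[< contradictory (m `|` n) >] then None
                      else Some (m `|` n)
  | _, _ => None
  end.

Definition msat {AP Sigma : Type} (I : Sigma -> set AP) (x : Sigma)
  (mu : monomial AP) : Prop :=
  match mu with
  | None => False
  | Some m => forall l, m l -> lit_holds I x l
  end.

Fixpoint simp {AP} (f : formula AP) : set (fconj AP) :=
  match f with
  | FAnd a b => [set c | exists c1 c2, simp a c1 /\ simp b c2 /\ c = c1 `|` c2]
  | FOr a b => simp a `|` simp b
  | FTt => [set set0]
  | _ => [set [set f]]
  end.

Fixpoint LF {AP} (f : formula AP) : set (monomial AP * fconj AP) :=
  match f with
  | FLit p b => [set (Some [set (p, b)], set0)]
  | FTt => [set (Some set0, set0)]
  | FFf => set0
  | FOr a b => LF a `|` LF b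
  | FAnd a b =>
      [set mc | exists m1 c1 m2 c2, LF a (m1, c1) /\ LF b (m2, c2) /\
                mmeet m1 m2 <> None /\ mc = (mmeet m1 m2, c1 `|` c2)]
  | FNext a => [set mc | exists c, simp a c /\ mc = (Some set0, c)]
  | FUntil a b =>
      LF b `|`
      [set mc | exists m c, LF a (m, c) /\ mc = (m, c `|` [set FUntil a b])]
  | FRelease a b =>
      [set mc | exists m1 c1 m2 c2, LF a (m1, c1) /\ LF b (m2, c2) /\
                mmeet m1 m2 <> None /\ mc = (mmeet m1 m2, c1 `|` c2)]
      `|`
      [set mc | exists m c, LF b (m, c) /\ mc = (m, c `|` [set FRelease a b])]
  end.

Definition pderiv {AP Sigma : Type} (I : Sigma -> set AP) (x : Sigma)
  (f : formula AP) : set (fconj AP) :=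
  [set c | exists mu, LF f (mu, c) /\ msat I x mu].

Fixpoint dderiv {AP Sigma : Type} (I : Sigma -> set AP) (x : Sigma)
  (f : formula AP) : set (fconj AP) :=
  match f with
  | FTt => [set set0]
  | FFf => set0
  | FLit p b => [set c | lit_holds I x (p, b) /\ c = set0]
  | FOr a b => dderiv I x a `|` dderiv I x b
  | FAnd a b =>
      [set c | exists c1 c2, dderiv I x a c1 /\ dderiv I x b c2 /\
               c = c1 `|` c2]
  | FNext a => simp a
  | FUntil a b =>
      dderiv I x b `|`
      [set c | exists c1, dderiv I x a c1 /\ c = c1 `|` [set FUntil a b]]
  | FRelease a b =>
      [set c | exists c1 c2, dderiv I x a c1 /\ dderiv I x b c2 /\
               c = c1 `|` c2]
      `|`
      [set c | exists c2, dderiv I x b c2 /\ c = c2 `|` [set FRelease a b]]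
  end.

(* Both derivatives are defined by the same recursion, except that [pderiv]
   first collects the monomials of the linear factors and only then tests them
   against [x].  Testing commutes with every way [LF] combines linear factors:
   with unions and with appending a conjunct trivially, and with conjunction
   because [x] satisfies [mu ⊓ nu] iff it satisfies both [mu] and [nu]. *)

From mathcomp Require Import all_boot.
From mathcomp Require Import boolp classical_sets.

Set Implicit Arguments.
Unset Strict Implicit.
Unset Printing Implicit Defensive.

Local Open Scope classical_set_scope.

Section SatisfiedFactors.

Variables (AP Sigma : Type) (I : Sigma -> set AP) (x : Sigma).

Lemma msat_mmeet (mu nu : monomial AP) :
  msat I x (mmeet mu nu) <-> msat I x mu /\ msat I x nu.
Proof.
case: mu nu => [m|] [n|] //=; try tauto.
case: asboolP => [[p [Hpos Hneg]]|_] /=.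
  split=> // -[Hm Hn].
  have Hp : lit_holds I x (p, true) by case: Hpos; [apply: Hm|apply: Hn].
  have Hnp : lit_holds I x (p, false) by case: Hneg; [apply: Hm|apply: Hn].
  exact: Hnp Hp.
split=> [H|[Hm Hn] l [Hl|Hl]]; [|exact: Hm|exact: Hn].
by split=> l Hl; apply: H; [left|right].
Qed.

Definition factors_sat (L : set (monomial AP * fconj AP)) : set (fconj AP) :=
  [set c | exists mu, L (mu, c) /\ msat I x mu].

Definition factors_meet (L1 L2 : set (monomial AP * fconj AP)) :=
  [set mc | exists m1 c1 m2 c2, L1 (m1, c1) /\ L2 (m2, c2) /\
            mmeet m1 m2 <> None /\ mc = (mmeet m1 m2, c1 `|` c2)].

Definition factors_append (L : set (monomial AP * fconj AP)) (f : formula AP) :=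
  [set mc | exists m c, L (m, c) /\ mc = (m, c `|` [set f])].

Lemma pderivE (f : formula AP) : pderiv I x f = factors_sat (LF f).
Proof. by []. Qed.

Lemma factors_satU (L1 L2 : set (monomial AP * fconj AP)) :
  factors_sat (L1 `|` L2) = factors_sat L1 `|` factors_sat L2.
Proof.
apply/seteqP; split=> c.
  by move=> [mu [[H|H] Hs]]; [left|right]; exists mu.
by move=> [[mu [H Hs]]|[mu [H Hs]]]; exists mu; split=> //; [left|right].
Qed.

Lemma factors_sat_meet (L1 L2 : set (monomial AP * fconj AP)) :
  factors_sat (factors_meet L1 L2) =
  [set c | exists c1 c2, factors_sat L1 c1 /\ factors_sat L2 c2 /\
           c = c1 `|` c2].
Proof.
apply/seteqP; split=> c.
  move=> [_ [[m1 [c1 [m2 [c2 [H1 [H2 [_ [-> ->]]]]]]]] /msat_mmeet [S1 S2]]].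
  by exists c1, c2; split; [exists m1|split; [exists m2|]].
move=> [c1 [c2 [[m1 [H1 S1]] [[m2 [H2 S2]] ->]]]].
have S : msat I x (mmeet m1 m2) by apply/msat_mmeet.
exists (mmeet m1 m2); split=> //.
by exists m1, c1, m2, c2; do 2 split=> //; split=> // E; rewrite E in S.
Qed.

Lemma factors_sat_append (L : set (monomial AP * fconj AP)) (f : formula AP) :
  factors_sat (factors_append L f) =
  [set c | exists c1, factors_sat L c1 /\ c = c1 `|` [set f]].
Proof.
apply/seteqP; split=> c.
  by move=> [_ [[m [c1 [H [-> ->]]]] S]]; exists c1; split=> //; exists m.
by move=> [c1 [[m [H S]] ->]]; exists m; split=> //; exists m, c1.
Qed.

End SatisfiedFactors.

Theorem lemma8 (AP Sigma : Type) (I : Sigma -> set AP) (phi : formula AP)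
  (x : Sigma) :
  pderiv I x phi = dderiv I x phi.
Proof.
rewrite pderivE.
elim: phi => [p b| | |a IHa b IHb|a IHa b IHb|a _|a IHa b IHb|a IHa b IHb] /=.
- apply/seteqP; split=> c.
    by move=> [_ [[-> ->] S]]; split=> //; apply: S.
  by move=> [Hl ->]; exists (Some [set (p, b)]); split=> // l ->.
- apply/seteqP; split=> c; first by move=> [? [[_ ->]]].
  by move=> ->; exists (Some set0); split.
- by apply/seteqP; split=> c // -[? []].
- by rewrite factors_sat_meet IHa IHb.
- by rewrite factors_satU IHa IHb.
- apply/seteqP; split=> c; first by move=> [? [[c' [H [-> ->]]]]].
  by move=> H; exists (Some set0); split=> //; exists c.
- by rewrite factors_satU factors_sat_append IHa IHb.
- by rewrite factors_satU factors_sat_meet factors_sat_append IHa IHb.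
Qed.
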